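(* Let $N\ge0$ be an integer, $p,q\ge0$ integers, and $a,b,a_1,\ldots,a_p,b_1,\ldots,b_q,z$ complex numbers with $z\ne0$ such that all denominators below are nonzero. Then \[ {}_{p+1}F_{q+1}^{[N]}\left(\begin{matrix}a,a_1,\ldots,a_p\\ b,b_1,\ldots,b_q\end{matrix};z\right) =\frac{(a)_{N} (b-a)_{N}}{(b)_{N}\, N!} \sum_{n=0}^{N}\frac{(1+n)_{N-n}}{(a+n)_{N-n}}\,\frac{(1+N-n)_{n}}{(b-a+N-n)_{n}}\, {}_{p}F_{q}^{[n]}\left(\begin{matrix}a_1,\ldots,a_p\\ b_1,\ldots,b_q\end{matrix};\frac{n}{N}z\right). \] (For $n=0$ the term ${}_{p}F_{q}^{[0]}$ equals $1$.)
   Context: $(x)_m=x(x+1)\cdots(x+m-1)$ is the rising factorial, $(x)_0=1$. The truncated generalized hypergeometric function is \[ {}_{p}F_{q}^{[N]}\left(\begin{matrix}a_1,\ldots,a_p\\ b_1,\ldots,b_q\end{matrix};z\right)=\sum_{m=0}^{N}\frac{(a_1)_m\cdots(a_p)_m}{(b_1)_m\cdots(b_q)_m\, m!}\,\frac{(N+1-m)_m}{(Nz^{-1}-m)_m}. \] *)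

From HB Require Import structures.
From mathcomp Require Import all_boot all_order all_algebra.
From mathcomp Require Import reals.
From mathcomp Require Export complex.
Set Implicit Arguments. Unset Strict Implicit. Unset Printing Implicit Defensive.
Import Order.TTheory GRing.Theory Num.Theory.
Local Open Scope ring_scope.

Definition rising {F : nzRingType} (x : F) (m : nat) : F :=
  \prod_(i < m) (x + i%:R).

Definition truncHyp {F : fieldType} (as_ bs : seq F) (N : nat) (z : F) : F :=
  \sum_(m < N.+1)
    (\prod_(a <- as_) rising a m) / ((\prod_(b <- bs) rising b m) * (m`!)%:R)
    * (rising (N.+1%:R - m%:R) m / rising (N%:R / z - m%:R) m).

From HB Require Import structures.
From mathcomp Require Import all_boot all_order all_algebra.
From mathcomp Require Import reals complex.
From mathcomp Require Import ring zify.
Import Order.TTheory GRing.Theory Num.Theory.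

(* The weights of the sum on the right are the beta-binomial probabilities
   W_n = C(N, n) (a)_n (b - a)_(N - n) / (b)_N.  Since (n + 1 - m)_m is the
   falling factorial n^_m, the m-th term of pFq^[n](n z / N) is
   c_m n^_m / (N/z - m)_m with c_m independent of n.  Exchanging the sums, the
   right side becomes sum_m c_m / (N/z - m)_m * sum_n W_n n^_m, and by the
   Chu-Vandermonde identity these factorial moments of the beta-binomial law are
   N^_m (a)_m / (b)_m, which is exactly the m-th term of p+1Fq+1^[N](z). *)

Lemma mul_ffact_bin n m : m <= n -> n ^_ (n - m) * n ^_ m = 'C(n, m) * n`!.
Proof.
move=> le_mn; rewrite -[n ^_ m]bin_ffact mulnCA -{3}(subKn le_mn).
by rewrite ffact_fact ?leq_subr.
Qed.

Lemma bin_ffactD n m k : 'C(n, m + k) * (m + k) ^_ m = n ^_ m * 'C(n - m, k).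
Proof.
have [lt_n_mk | le_mk_n] := ltnP n (m + k).
  rewrite bin_small // mul0n; have [lt_nm | le_mn] := ltnP n m.
    by rewrite ffact_small.
  by rewrite (@bin_small (n - m)) ?muln0 //; lia.
have ffk : (m + k) ^_ m * k`! = (m + k)`!.
  by rewrite -{2}(addKn m k) ffact_fact ?leq_addr.
have bink : 'C(n - m, k) * (k`! * (n - m - k)`!) = (n - m)`!.
  by rewrite bin_fact //; lia.
apply/eqP; rewrite -(@eqn_pmul2r (k`! * (n - m - k)`!)) ?muln_gt0 ?fact_gt0 //.
apply/eqP.
rewrite -[RHS]mulnA bink ffact_fact; last lia.
by rewrite mulnA -[_ * _ * k`!]mulnA ffk -mulnA -subnDA bin_fact.
Qed.

Local Open Scope ring_scope.

Section Rising.
Variable F : nzRingType.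
Implicit Types x : F.

Lemma rising0 x : rising x 0 = 1.
Proof. by rewrite /rising big_ord0. Qed.

Lemma risingS x m : rising x m.+1 = rising x m * (x + m%:R).
Proof. by rewrite /rising big_ord_recr. Qed.

Lemma risingSl x m : rising x m.+1 = x * rising (x + 1) m.
Proof.
rewrite /rising big_ord_recl addr0; congr (_ * _).
by apply: eq_bigr => i _; rewrite lift0 -nat1r addrA.
Qed.

Lemma risingD x m k : rising x (m + k) = rising x m * rising (x + m%:R) k.
Proof.
elim: k => [|k IH]; first by rewrite addn0 rising0 mulr1.
by rewrite addnS !risingS IH natrD mulrA addrA.
Qed.

Lemma rising_ffact n m : rising (n.+1%:R - m%:R : F) m = (n ^_ m)%:R.
Proof.
elim: m => [|m IH]; first by rewrite rising0.
rewrite risingSl ffactnSr natrM -IH -[m.+1]addn1 natrD opprD addrA subrK.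
case: (leqP m n) => [hmn | hnm]; last by rewrite IH ffact_small // mulr0 mul0r.
by rewrite IH -natr1 addrAC addrK -natrB // -!natrM mulnC.
Qed.

End Rising.

Lemma risingDn (F : comNzRingType) (x y : F) n :
  rising (x + y) n = \sum_(k < n.+1) 'C(n, k)%:R * (rising x k * rising y (n - k)).
Proof.
elim: n => [|n IHn]; first by rewrite big_ord1 subnn !rising0 mulr1 mul1r.
have split_term (k : 'I_n.+1) :
    'C(n, k)%:R * (rising x k * rising y (n - k)) * (x + y + n%:R)
    = 'C(n, k)%:R * (rising x k.+1 * rising y (n - k))
      + 'C(n, k)%:R * (rising x k * rising y (n.+1 - k)).
  have le_kn : (k <= n)%N by rewrite -ltnS.
  by rewrite subSn // !risingS natrB //; ring.
have pascal (k : 'I_n.+1) :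
    'C(n.+1, lift ord0 k)%:R
      * (rising x (lift ord0 k) * rising y (n.+1 - lift ord0 k))
    = 'C(n, k.+1)%:R * (rising x k.+1 * rising y (n - k))
      + 'C(n, k)%:R * (rising x k.+1 * rising y (n - k)).
  by rewrite lift0 binS natrD mulrDl subSS.
rewrite risingS IHn mulr_suml (eq_bigr _ (fun k _ => split_term k)) big_split /=.
rewrite [RHS]big_ord_recl [in RHS](eq_bigr _ (fun k _ => pascal k)) big_split /=.
rewrite addrA addrC; congr (_ + _).
rewrite big_ord_recl big_ord_recr /= (bin_small (ltnSn n)) mul0r addr0 !bin0.
by congr (_ + _); apply: eq_bigr => k _; rewrite subSS.
Qed.

Section BetaBinomial.
Variable F : numFieldType.
Implicit Types a b : F.

Definition betabin N a b n : F :=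
  rising a n * rising (b - a) (N - n) / rising b N * 'C(N, n)%:R.

Lemma betabinE N a b n : (n <= N)%N ->
  rising (a + n%:R) (N - n) != 0 -> rising (b - a + N%:R - n%:R) n != 0 ->
  rising a N * rising (b - a) N / (rising b N * (N`!)%:R) *
  (rising (1 + n%:R) (N - n) / rising (a + n%:R) (N - n) *
   (rising (1 + N%:R - n%:R) n / rising (b - a + N%:R - n%:R) n))
  = betabin N a b n.
Proof.
move=> le_nN ha hba.
have -> : rising (1 + n%:R : F) (N - n) = (N ^_ (N - n))%:R.
  by rewrite -rising_ffact natrB // -nat1r; congr (rising _ _); ring.
rewrite nat1r rising_ffact [X in _ * X]mulrACA -natrM mul_ffact_bin // natrM.
have -> : rising a N = rising a n * rising (a + n%:R) (N - n).
  by rewrite -risingD subnKC.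
have -> : rising (b - a) N = rising (b - a) (N - n) * rising (b - a + N%:R - n%:R) n.
  by rewrite -addrA -natrB // -risingD subnK.
(* 1 / (b)_N is a common factor of both sides, so (b)_N need not be invertible. *)
rewrite /betabin invfM; move: (rising b N)^-1 => c.
by field; rewrite ha hba pnatr_eq0 -lt0n fact_gt0.
Qed.

Lemma sum_betabin_ffact N a b m : (m <= N)%N -> rising b N != 0 ->
  \sum_(n < N.+1) betabin N a b n * (n ^_ m)%:R
  = rising a m / rising b m * (N ^_ m)%:R.
Proof.
move=> le_mN; rewrite -(subnKC le_mN) risingD mulf_eq0 negb_or subnKC //.
case/andP=> bm_neq0 bmN_neq0.
have shift_term (k : 'I_(N - m).+1) :
    betabin N a b (k + m) * ((k + m) ^_ m)%:R = rising a m * (N ^_ m)%:R / rising b N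
      * ('C(N - m, k)%:R * (rising (a + m%:R) k * rising (b - a) (N - m - k))).
  rewrite /betabin -[_ * 'C(_, _)%:R * _]mulrA -natrM addnC bin_ffactD natrM.
  by rewrite risingD subnDA; ring.
rewrite -(big_mkord xpredT (fun n => betabin N a b n * (n ^_ m)%:R)).
rewrite (@big_cat_nat _ _ _ m) ?leqW //= big_nat big1 ?add0r; last first.
  by move=> n /andP[_ lt_nm]; rewrite ffact_small // mulr0.
rewrite -{1}[m]add0n big_addn big_mkord subSn // (eq_bigr _ (fun k _ => shift_term k)).
rewrite -mulr_sumr -risingDn.
have -> : a + m%:R + (b - a) = b + m%:R by rewrite addrC addrA subrK.
rewrite -(subnKC le_mN) risingD subnKC //.
by field; rewrite bm_neq0 bmN_neq0.
Qed.
End BetaBinomial.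

Arguments betabin {F} N a b n.

Definition hypCoef {F : fieldType} (as_ bs : seq F) (m : nat) : F :=
  (\prod_(a <- as_) rising a m) / ((\prod_(b <- bs) rising b m) * (m`!)%:R).

Lemma hypCoef_cons (F : fieldType) (a b : F) as_ bs m :
  hypCoef (a :: as_) (b :: bs) m = rising a m / rising b m * hypCoef as_ bs m.
Proof. by rewrite /hypCoef !big_cons !invfM; ring. Qed.

Lemma truncHyp_ffact (F : fieldType) (as_ bs : seq F) N z :
  truncHyp as_ bs N z =
  \sum_(m < N.+1) hypCoef as_ bs m / rising (N%:R / z - m%:R) m * (N ^_ m)%:R.
Proof. by apply: eq_bigr => m _; rewrite rising_ffact mulrA mulrAC. Qed.

Lemma truncHyp_scale (F : numFieldType) (as_ bs : seq F) n N z : (n <= N)%N ->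
  truncHyp as_ bs n (n%:R / N%:R * z) =
  \sum_(m < N.+1) hypCoef as_ bs m / rising (N%:R / z - m%:R) m * (n ^_ m)%:R.
Proof.
(* No hypothesis on z or N is needed: as x / 0 = 0, n / (n / N * z) = N / z
   holds for every n != 0. *)
move=> le_nN; rewrite truncHyp_ffact.
rewrite (big_ord_widen N.+1 (fun m => hypCoef as_ bs m
  / rising (n%:R / (n%:R / N%:R * z) - m%:R) m * (n ^_ m)%:R)) ?ltnS // big_mkcond.
apply: eq_bigr => -[[|m] _] _ /=; first by rewrite !rising0.
case: ltnP => [lt_mn | lt_nm]; last by rewrite ffact_small // mulr0n mulr0.
have n_neq0 : n%:R != 0 :> F by rewrite pnatr_eq0; lia.
by rewrite !invfM invrK mulrA mulrA mulfV // mul1r.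
Qed.

Theorem theorem3p3 (R : realType) (N : nat) (a b z : R[i]) (as_ bs : seq R[i])
  (hz : z != 0)
  (hb : forall m, (m <= N)%N -> rising b m != 0)
  (hbs : forall bj, bj \in bs -> forall m, (m <= N)%N -> rising bj m != 0)
  (hzN : forall m, (m <= N)%N -> rising (N%:R / z - m%:R) m != 0)
  (hzn : forall n m, (m <= n)%N -> (n <= N)%N ->
           rising (n%:R / (n%:R / N%:R * z) - m%:R) m != 0)
  (ha : forall n, (n <= N)%N -> rising (a + n%:R) (N - n) != 0)
  (hba : forall n, (n <= N)%N -> rising (b - a + N%:R - n%:R) n != 0) :
  truncHyp (a :: as_) (b :: bs) N z =
  rising a N * rising (b - a) N / (rising b N * (N`!)%:R) *
  \sum_(n < N.+1)
    (rising (1 + n%:R) (N - n) / rising (a + n%:R) (N - n)) *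
    (rising (1 + N%:R - n%:R) n / rising (b - a + N%:R - n%:R) n) *
    truncHyp as_ bs n (n%:R / N%:R * z).
Proof.
(* hz, hbs, hzN and hzn only exclude junk values (x / 0 = 0); the identity
   holds without them. *)
rewrite mulr_sumr truncHyp_ffact.
under [RHS]eq_bigr => n _.
  have le_nN : (n <= N)%N by rewrite -ltnS.
  rewrite [_ * (_ * truncHyp _ _ _ _)]mulrA betabinE ?ha ?hba // truncHyp_scale //.
  rewrite mulr_sumr; under eq_bigr do rewrite mulrCA.
  over.
rewrite exchange_big /=; apply: eq_bigr => m _.
have le_mN : (m <= N)%N by rewrite -ltnS.
rewrite -mulr_sumr sum_betabin_ffact ?hb //.
by rewrite hypCoef_cons; ring.
Qed.
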